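(* Let $-1\le t\le s\le n$ and $-1\le k\le n-s-1$ be integers. Let $X$ be an $n$-dimensional projective space over a field and let $K$ be a $k$-dimensional subspace of $X$. For each integer $d$ with $-1\le d\le \min\{k,t\}$, let $\mathcal B_d$ be an $(s-d-1,t-d-1)$-blocking set in the quotient space $X/K$. Then the (disjoint) union $$\mathcal B:=\bigcup_{d=-1}^{\min\{k,t\}}\{T\in \mathrm{Gr}_t(X):\ \dim(K\cap T)=d,\ \langle K,T\rangle\in\mathcal B_d\}$$ is an $(s,t)$-blocking set in $X$.
   Context: Projective dimension is used throughout; the empty subspace has dimension $-1$. For a projective space $Y$ and an integer $d$, $\mathrm{Gr}_d(Y)$ is the set of $d$-dimensional subspaces of $Y$. For $K\in\mathrm{Gr}_k(X)$, the quotient space $X/K$ is the projective space of dimension $\dim X-k-1$ whose $r$-dimensional subspaces ($-1\le r\le \dim X-k-1$) are the $(r+k+1)$-dimensional subspaces of $X$ containing $K$, ordered by inclusion (its unique $(-1)$-dimensional subspace is $K$ itself). $\langle K,T\rangle$ denotes the span of $K$ and $T$, regarded as a subspace of $X/K$. For integers $-1\le t\le s\le \dim Y$, an $(s,t)$-blocking set in a projective space $Y$ is a set $\mathcal B\subseteq\mathrm{Gr}_t(Y)$ such that every $s$-dimensional subspace of $Y$ contains at least one element of $\mathcal B$. *)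

(* A projective space of dimension n over a field F is modelled
   as the lattice of (detachable) vector subspaces of a finite-dimensional
   F-vector space vT with \dim {:vT} = n+1; projective dimension = vector dim - 1. *)
From HB Require Import structures.
From mathcomp Require Import all_boot all_order all_algebra.
Set Implicit Arguments. Unset Strict Implicit. Unset Printing Implicit Defensive.
Import Order.TTheory GRing.Theory Num.Theory.
Local Open Scope ring_scope.

Section Proj.
Variables (F : fieldType) (vT : vectType F).

Definition pdim (U : {vspace vT}) : int := (\dim U)%:Z - 1.

Definition Gr (Y : {vspace vT}) (d : int) (U : {vspace vT}) : Prop :=
  (U <= Y)%VS /\ pdim U = d.

(* Gr_r(X/K): r-dimensional subspaces of the quotient X/K, i.e. the
   (r + k + 1)-dimensional subspaces of X containing K, where k = pdim K *)
Definition qGr (K : {vspace vT}) (r : int) (U : {vspace vT}) : Prop :=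
  (K <= U)%VS /\ pdim U = r + pdim K + 1.

Definition blocking_set (Y : {vspace vT}) (s t : int)
    (B : {vspace vT} -> Prop) : Prop :=
  (forall T, B T -> Gr Y t T) /\
  (forall S, Gr Y s S -> exists T, B T /\ (T <= S)%VS).

(* (s,t)-blocking set in the quotient space X/K (X = the whole space);
   inclusion in X/K is inclusion in X *)
Definition qblocking_set (K : {vspace vT}) (s t : int)
    (B : {vspace vT} -> Prop) : Prop :=
  (forall T, B T -> qGr K t T) /\
  (forall S, qGr K s S -> exists T, B T /\ (T <= S)%VS).

End Proj.

(** Let S be an s-space and d := dim (K ∩ S).  If d <= t, then K + S is an
    (s-d-1)-space of X/K, so B_d contains some U with K <= U <= K + S; by the
    modular law T := U ∩ S is a t-space with K ∩ T = K ∩ S and K + T = U.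
    If d > t, take any t-space T inside K ∩ S; then K + T = K, which lies in
    B_t because the only (-1)-space of X/K is K itself. *)
From HB Require Import structures.
From mathcomp Require Import all_boot all_order all_algebra zify.
Import Order.TTheory GRing.Theory Num.Theory.
Local Open Scope ring_scope.

Section ProjectiveSubspaces.
Variables (F : fieldType) (vT : vectType F).
Implicit Types (U V W K S T : {vspace vT}) (Bd : {vspace vT} -> Prop).

Lemma dimv_add_line U v : v \notin U -> \dim (U + <[v]>) = (\dim U).+1.
Proof.
move=> vU; have := dimv_sum_cap U <[v]>; rewrite dim_vline.
have /leqifP := dimv_leqif_sup (addvSl U <[v]>).
have v_neq0 : v != 0%R by apply: contraNneq vU => ->; rewrite mem0v.
by rewrite subv_add subvv -memvE (negbTE vU) v_neq0 /=; lia.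
Qed.

Lemma exists_subv_dim U V m : (U <= V)%VS -> (\dim U <= m <= \dim V)%N ->
  exists2 W, (U <= W <= V)%VS & \dim W = m.
Proof.
move=> UV; elim: m => [|m IHm] /andP[Um mV].
  by exists U; rewrite ?subvv ?UV //; lia.
have [<-|dimU_neq] := eqVneq (\dim U) m.+1; first by exists U; rewrite ?subvv ?UV.
have [W /andP[UW WV] dimW] := IHm ltac:(lia).
have /subvPn[v vV vW] : ~~ (V <= W)%VS.
  by apply: contraTN mV => /dimvS; lia.
exists (W + <[v]>)%VS; last by rewrite dimv_add_line ?dimW.
by rewrite (subv_trans UW (addvSl _ _)) subv_add WV -memvE.
Qed.

Lemma exists_subv_pdim U V (d : int) : (U <= V)%VS -> pdim U <= d <= pdim V ->
  exists2 W, (U <= W <= V)%VS & pdim W = d.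
Proof.
rewrite /pdim => UV /andP[Ud dV].
have [W UWV dimW] := exists_subv_dim U V (absz (d + 1)) UV ltac:(lia).
by exists W; rewrite // /pdim dimW; lia.
Qed.

Lemma pdim_addv U V : pdim (U + V) = pdim U + pdim V - pdim (U :&: V).
Proof. by have := dimv_sum_cap U V; rewrite /pdim; lia. Qed.

(* The diamond isomorphism between the intervals [K, K + S] and [K ∩ S, S]. *)
Lemma diamond_capv K U S : (K <= U <= K + S)%VS ->
  [/\ (K + U :&: S = U)%VS, (K :&: (U :&: S) = K :&: S)%VS
    & (\dim (U :&: S) + \dim K = \dim U + \dim (K :&: S))%N].
Proof.
case/andP=> KU UKS.
have KUS : (K :&: (U :&: S) = K :&: S)%VS by rewrite capvA (capv_idPl KU).
have US : (U + S = K + S)%VS.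
  by apply/subv_anti/andP; rewrite !subv_add UKS !addvSr (subv_trans KU (addvSl U S)).
have dimUS := dimv_sum_cap U S; rewrite US in dimUS.
have dimKS := dimv_sum_cap K S; have dimKUS := dimv_sum_cap K (U :&: S).
rewrite KUS in dimKUS; split=> //; last by lia.
apply/eqP; rewrite eqEdim subv_add KU capvSl /=; lia.
Qed.

Lemma qblocking_set_join K S t Bd :
  qblocking_set K (pdim S - pdim (K :&: S) - 1) (t - pdim (K :&: S) - 1) Bd ->
  exists2 T, (T <= S)%VS & [/\ pdim T = t, pdim (K :&: T) = pdim (K :&: S)
                              & Bd (K + T)%VS].
Proof.
case=> BqGr Bblock.
have [|U [BU UKS]] := Bblock (K + S)%VS.
  by split; [exact: addvSl | rewrite pdim_addv; lia].
have [KU dimU] := BqGr U BU.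
have [KUS_U KUS dimUS] := diamond_capv K U S ltac:(by rewrite KU).
exists (U :&: S)%VS; first exact: capvSr.
split; last by rewrite KUS_U.
- by move: dimU; rewrite /pdim; lia.
- by rewrite KUS.
Qed.

Lemma qblocking_setN1 K r Bd : qblocking_set K r (-1) Bd ->
  -1 <= r -> r + pdim K + 1 <= pdim (fullv : {vspace vT}) -> Bd K.
Proof.
case=> BqGr Bblock r_ge r_le.
have [W /andP[KW _] dimW] := exists_subv_pdim K fullv (r + pdim K + 1) (subvf K)
  ltac:(apply/andP; split=> //; lia).
have [U [BU _]] := Bblock W (conj KW dimW).
have [KU dimU] := BqGr U BU.
suff <- : U = K by [].
by apply/eqP; rewrite eq_sym eqEdim KU; move: dimU; rewrite /pdim; lia.
Qed.

End ProjectiveSubspaces.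

Theorem theorem3p8 (F : fieldType) (vT : vectType F) (n t s k : int)
    (hn : pdim (fullv : {vspace vT}) = n)
    (ht1 : -1 <= t) (hts : t <= s) (hsn : s <= n)
    (hk1 : -1 <= k) (hkn : k <= n - s - 1)
    (K : {vspace vT}) (hK : pdim K = k)
    (B : int -> {vspace vT} -> Prop)
    (hB : forall d : int, -1 <= d -> d <= k -> d <= t ->
          qblocking_set K (s - d - 1) (t - d - 1) (B d)) :
  blocking_set fullv s t
    (fun T : {vspace vT} => exists d : int,
       [/\ -1 <= d, d <= k, d <= t,
           Gr fullv t T /\ pdim (K :&: T)%VS = d & B d (K + T)%VS]).
Proof.
split=> [T [d [_ _ _ [] //]] | S [_ dimS]].
have d_ge : -1 <= pdim (K :&: S) by rewrite /pdim; lia.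
have d_le : pdim (K :&: S) <= k by rewrite -hK /pdim; have := dimvS (capvSl K S); lia.
have [d_le_t | t_lt_d] := lerP (pdim (K :&: S)) t.
  have := hB _ d_ge d_le d_le_t; rewrite -dimS.
  case/qblocking_set_join=> T TS [dimT dimKT BKT].
  exists T; split=> //; exists (pdim (K :&: S)).
  by split=> //; split; first exact: (conj (subvf T) dimT).
have [T /andP[_ TKS] dimT] :=
  @exists_subv_pdim F vT 0%VS (K :&: S)%VS t (sub0v _)
    ltac:(by rewrite /pdim dimv0 (ltW t_lt_d) andbT; lia).
have TK : (T <= K)%VS := subv_trans TKS (capvSl K S).
have BtK : B t K.
  have := hB t ht1 ltac:(lia) (lexx t); rewrite subrr sub0r.
  by move/qblocking_setN1; apply; lia.
exists T; split; last exact: subv_trans TKS (capvSr K S).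
exists t; rewrite (capv_idPr TK) (addv_idPl TK) dimT; split=> //; first lia.
by split=> //; exact: (conj (subvf T) dimT).
Qed.
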